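(* Let $1<p<\infty$ and $\theta>0$. There exists a weight function $a$ on $\mathbb R$ such that the generalized grand Lebesgue space $L_a^{p),\theta}(\mathbb R)$ is not reflexive.
   Context: A weight function on $\mathbb R^n$ is a positive, measurable, locally integrable function (vanishing at most on a set of measure zero). For $1<p<\infty$, $\theta\ge 0$ and a weight $a$, the generalized grand Lebesgue space $L_a^{p),\theta}(\mathbb R^n)$ is the space of measurable $f$ with $\|f\|_{L_a^{p),\theta}}=\sup_{0<\varepsilon\le p-1}\varepsilon^{\theta}\Big(\int_{\mathbb R^n}|f(x)|^{p-\varepsilon}a(x)^{\varepsilon/p}\,dx\Big)^{1/(p-\varepsilon)}<\infty$. *)

From HB Require Import structures.
From mathcomp Require Import all_boot all_order all_algebra.
From mathcomp Require Import all_classical all_reals all_analysis.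
Set Implicit Arguments. Unset Strict Implicit. Unset Printing Implicit Defensive.
Import Order.TTheory GRing.Theory Num.Theory.
Local Open Scope classical_set_scope.
Local Open Scope ring_scope.

Section GGL.
Context {R : realType}.
Local Notation mu := (@lebesgue_measure R).

Definition weight (a : R -> R) : Prop :=
  [/\ (forall x, 0 <= a x),
      locally_integrable setT a &
      mu [set x | a x = 0] = 0%E].

Definition ggl_norm (p theta : R) (a : R -> R) (f : R -> R) : \bar R :=
  ereal_sup [set ((eps `^ theta)%:E *
     ((\int[mu]_x ((`|f x| `^ (p - eps)) * (a x `^ (eps / p)))%:E)
        `^ (1 / (p - eps)))%E)%E
   | eps in `]0, p - 1]].

Definition ggl_space (p theta : R) (a : R -> R) : set (R -> R) :=
  [set f | measurable_fun setT f /\ (ggl_norm p theta a f < +oo)%E].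

Definition bounded_linear_functionals (X : set (R -> R)) (N : (R -> R) -> \bar R)
  : set ((R -> R) -> R) :=
  [set phi | (forall f g, X f -> X g -> phi (f \+ g) = phi f + phi g) /\
             (forall (c : R) f, X f -> phi (c \*: f) = c * phi f) /\
             exists M : R, forall f, X f -> (`|phi f|%:E <= M%:E * N f)%E].

(* phi admits bound M: |phi f| <= M ||f|| on X; the dual norm of phi is the
   infimum of such M >= 0. *)
Definition dual_bound (X : set (R -> R)) (N : (R -> R) -> \bar R)
  (phi : (R -> R) -> R) (M : R) : Prop :=
  0 <= M /\ forall f, X f -> (`|phi f|%:E <= M%:E * N f)%E.

(* Reflexivity: every bounded linear functional Psi on the dual X^* is of the
   form phi |-> phi f for some f in X (canonical embedding onto the bidual). *)
Definition reflexive_space (X : set (R -> R)) (N : (R -> R) -> \bar R) : Prop :=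
  let Xs := bounded_linear_functionals X N in
  forall Psi : ((R -> R) -> R) -> R,
    (forall phi psi, Xs phi -> Xs psi -> Psi (phi \+ psi) = Psi phi + Psi psi) ->
    (forall (c : R) phi, Xs phi -> Psi (c \*: phi) = c * Psi phi) ->
    (exists C : R, forall phi M, Xs phi -> dual_bound X N phi M -> `|Psi phi| <= C * M) ->
    exists2 f, X f & forall phi, Xs phi -> Psi phi = phi f.

End GGL.

From HB Require Import structures.
From mathcomp Require Import all_boot all_order all_algebra.
From mathcomp Require Import all_classical all_reals all_analysis.
From mathcomp Require Import measurable_realfun.
Import Order.TTheory GRing.Theory Num.Theory.
Import numFieldNormedType.Exports.
Local Open Scope classical_set_scope.
Local Open Scope ring_scope.
Set Implicit Arguments. Unset Strict Implicit.

(* Take the weight a = 1.  Since the exponent p - eps = 1 is allowed,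
   (p-1)^theta ||f||_1 <= ||f||, so integration over any measurable set D is
   a bounded functional.  The unit bumps f_n = 1_[n, n+1] all have norm
   (p-1)^theta, so a limit along a free ultrafilter, Phi |-> lim_n Phi(f_n),
   is a bounded functional on the dual.  Were it the evaluation at some h,
   testing with D = R would give int h = 1, while testing with the cells
   ]-oo,0[ and [k, k+1[ (which eventually miss the f_n) would give zero
   integral on each cell of a partition of R, a contradiction. *)

Section ultrafilter_limit.
Context {R : realType} {T : Type} (G : set_system T) {GU : UltraFilter G}.

Definition ulim (u : T -> R) : R := lim (u @ G).

Lemma ulim_cvg (u : T -> R) (B : R) : (forall t, `|u t| <= B) ->
  u @ G --> ulim u.
Proof.
move=> uB.
have cB : compact `[-B, B] := @segment_compact _ _ _.
have GB : G (u @^-1` `[-B, B]%classic).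
  by apply: filterE => t /=; rewrite in_itv /= -ler_norml.
have [l [_ cl]] := cB (u @ G) _ GB.
suff ul : u @ G --> l by rewrite /ulim (cvg_lim _ ul).
move=> V /= lV.
have [//|GnV] := in_ultra_setVsetC (u @^-1` V) GU.
by have [x []] := cl (~` V) V GnV lV.
Qed.

Lemma ulimD (u v : T -> R) (B C : R) : (forall t, `|u t| <= B) ->
  (forall t, `|v t| <= C) -> ulim (u \+ v) = ulim u + ulim v.
Proof.
move=> uB vC; apply: cvg_lim; first exact: Rhausdorff.
exact: cvgD (ulim_cvg uB) (ulim_cvg vC).
Qed.

Lemma ulimZ (u : T -> R) (B c : R) : (forall t, `|u t| <= B) ->
  ulim (fun t => c * u t) = c * ulim u.
Proof.
move=> uB; apply: cvg_lim; first exact: Rhausdorff.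
exact: cvgM (cvg_cst c) (ulim_cvg uB).
Qed.

Lemma ulim_norm_le (u : T -> R) (B : R) : (forall t, `|u t| <= B) ->
  `|ulim u| <= B.
Proof.
move=> uB.
apply: (@closed_cvg _ _ G _ u [set x : R | `|x| <= B] _ _ _ (ulim_cvg uB)).
  rewrite (_ : [set x : R | _] = (fun x : R => `|x|) @^-1` [set x | x <= B]) //.
  by apply: preimage_closed => // x _; exact: norm_continuous.
exact: nearW.
Qed.

Lemma ulim_near_cst (u : T -> R) (c : R) :
  (\forall t \near G, u t = c) -> ulim u = c.
Proof.
by move=> uc; apply: cvg_lim; [exact: Rhausdorff | exact: cvg_near_cst].
Qed.

End ultrafilter_limit.

Section unit_weight.
Context {R : realType}.
Local Notation mu := (@lebesgue_measure R).

Lemma weight_cst1 : weight (cst 1 : R -> R).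
Proof.
split=> //.
- split=> //; first exact: openT.
  move=> K _ cK.
  rewrite (_ : (fun x => _) = cst 1%E); last by apply/funext => x; rewrite normr1.
  rewrite integral_cst ?mul1e; last exact: compact_measurable.
  exact: compact_finite_measure.
- rewrite (_ : [set x | _] = set0) ?measure0 //.
  by apply/seteqP; split=> x //= /eqP; rewrite oner_eq0.
Qed.

Context (p theta : R) (hp : 1 < p) (htheta : 0 < theta).
Local Notation N := (ggl_norm p theta (cst 1)).
Local Notation X := (ggl_space p theta (cst 1)).

Definition ggl_const := (p - 1) `^ theta.

Lemma ggl_const_gt0 : 0 < ggl_const.
Proof. by rewrite powR_gt0 // subr_gt0. Qed.

Lemma pm1_in_ggl_range : p - 1 \in `]0, p - 1].
Proof. by rewrite in_itv /= lexx subr_gt0 hp. Qed.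

Lemma ggl_norm_ge_L1 f : (ggl_const%:E * \int[mu]_x (`|f x|)%:E <= N f)%E.
Proof.
apply: ereal_sup_ubound; exists (p - 1); first exact: pm1_in_ggl_range.
rewrite /ggl_const (_ : p - (p - 1) = 1); last by rewrite opprB addrC subrK.
rewrite divr1 poweRe1; last first.
  by apply: integral_ge0 => x _; rewrite lee_fin mulr_ge0 // powR_ge0.
by congr (_ * _)%E; apply: eq_integral => x _; rewrite /= powR1 mulr1 powRr1.
Qed.

Lemma L1_le_ggl_norm f : (\int[mu]_x (`|f x|)%:E <= (ggl_const^-1)%:E * N f)%E.
Proof. by rewrite lee_pdivlMl ?ggl_const_gt0 //; exact: ggl_norm_ge_L1. Qed.

Lemma ggl_space_integrable f : X f -> mu.-integrable setT (EFin \o f).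
Proof.
case=> mf Nf; apply/integrableP; split; first exact/measurable_EFinP.
apply: le_lt_trans (L1_le_ggl_norm f) _.
by apply: lte_mul_pinfty => //; rewrite lee_fin invr_ge0 ltW // ggl_const_gt0.
Qed.

Definition integral_on (D : set (measurableTypeR R)) (f : R -> R) : R :=
  fine (\int[mu]_(x in D) (f x)%:E).

Lemma integral_on_dual (D : set (measurableTypeR R)) : measurable D ->
  bounded_linear_functionals X N (integral_on D).
Proof.
move=> mD.
have iD f : X f -> mu.-integrable D (EFin \o f).
  by move=> Xf; apply: integrableS (ggl_space_integrable Xf).
split; [|split].
- move=> f g Xf Xg; rewrite /integral_on.
  under eq_integral do rewrite /= EFinD.
  rewrite integralD //; [|exact: iD|exact: iD].
  by rewrite fineD // (integrable_fin_num mD (iD _ _)).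
- move=> c f Xf; rewrite /integral_on.
  under eq_integral do rewrite /= EFinM.
  rewrite integralZl //; last exact: iD.
  by rewrite fineM // (integrable_fin_num mD (iD _ _)).
- exists ggl_const^-1 => f Xf; rewrite /integral_on.
  rewrite -abse_EFin fineK; last by rewrite (integrable_fin_num mD (iD _ Xf)).
  apply: le_trans (le_abse_integral _ _ _) _ => //.
    by apply/measurable_EFinP; apply: measurable_funS (proj1 Xf).
  apply: le_trans (L1_le_ggl_norm f).
  apply: ge0_subset_integral => //.
  by apply/measurable_EFinP; apply: measurableT_comp => //; exact: (proj1 Xf).
Qed.

Definition unit_itv (n : nat) : set (measurableTypeR R) := `[n%:R, n%:R + 1]%classic.
Definition bump (n : nat) : R -> R := \1_(unit_itv n).

Lemma measurable_unit_itv n : measurable (unit_itv n).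
Proof. exact: measurable_itv. Qed.

Lemma lebesgue_measure_unit_itv n : mu (unit_itv n) = 1%E.
Proof.
rewrite lebesgue_measure_itv /= lte_fin ltrDl ltr01.
by rewrite -EFinB addrAC subrr add0r.
Qed.

Lemma integral_on_bump (D : set (measurableTypeR R)) n : measurable D ->
  integral_on D (bump n) = fine (mu (unit_itv n `&` D)).
Proof.
by move=> mD; rewrite /integral_on integral_indic //; exact: measurable_unit_itv.
Qed.

Lemma ggl_norm_bump_term n eps : 0 < eps < p ->
  ((eps `^ theta)%:E * ((\int[mu]_x ((`|bump n x| `^ (p - eps)) *
     (cst 1 x `^ (eps / p)))%:E) `^ (1 / (p - eps))))%E = (eps `^ theta)%:E.
Proof.
case/andP => e0 ep.
rewrite (eq_integral (fun x => (\1_(unit_itv n) x)%:E)); last first.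
  move=> x _; rewrite /= powR1 mulr1 /bump indicE.
  case: (x \in unit_itv n); first by rewrite normr1 powR1.
  by rewrite normr0 powR0 // subr_eq0 gt_eqF.
rewrite integral_indic //; last exact: measurable_unit_itv.
rewrite setIT (_ : _ (unit_itv n) = 1%E) ?poweR1r ?mule1 //.
exact: lebesgue_measure_unit_itv.
Qed.

Lemma ggl_norm_bump n : N (bump n) = ggl_const%:E.
Proof.
apply/eqP; rewrite eq_le; apply/andP; split.
  apply: ge_ereal_sup => _ [eps + <-]; rewrite /= in_itv /= => /andP[e0 ep].
  rewrite ggl_norm_bump_term; last by rewrite e0 (le_lt_trans ep) // gtrBl ltr01.
  by rewrite lee_fin ge0_ler_powR // ?nnegrE ltW // subr_gt0.
apply: ereal_sup_ubound; exists (p - 1); first exact: pm1_in_ggl_range.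
by rewrite ggl_norm_bump_term // subr_gt0 hp gtrBl ltr01.
Qed.

Lemma bump_in_ggl n : X (bump n).
Proof.
split; first by apply: measurable_indic; exact: measurable_unit_itv.
by rewrite ggl_norm_bump ltry.
Qed.

Lemma dual_bounded_on_bumps phi : bounded_linear_functionals X N phi ->
  exists B : R, forall n, `|phi (bump n)| <= B.
Proof.
move=> [_ [_ [M hM]]]; exists (`|M| * ggl_const) => n.
have := hM _ (bump_in_ggl n); rewrite ggl_norm_bump -EFinM lee_fin => /le_trans.
by apply; rewrite ler_wpM2r ?ler_norm // ltW // ggl_const_gt0.
Qed.

Definition cell (k : nat) : set (measurableTypeR R) :=
  if k is k'.+1 then `[k'%:R, k'%:R + 1[%classic else `]-oo, 0[%classic.

Lemma measurable_cell k : measurable (cell k).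
Proof. by case: k => [|k]; exact: measurable_itv. Qed.

Lemma bigcup_cell : \bigcup_k cell k = setT.
Proof.
apply/seteqP; split=> // x _.
have [x0|x0] := ltP x 0; first by exists 0%N => //=; rewrite in_itv /= x0.
exists (Num.truncn x).+1 => //=; rewrite in_itv /= natr1.
exact: truncn_itv.
Qed.

Lemma trivIset_cell : trivIset setT cell.
Proof.
have cell_trunc k x : cell k.+1 x -> 0 <= x /\ k = Num.truncn x.
  rewrite /= in_itv /= => /andP[kx xk]; have x0 := le_trans (ler0n _ k) kx.
  by split=> //; apply/esym/truncn_def; rewrite kx -natr1 xk.
move=> [|i] [|j] _ _ [x [/= +]] //.
- by rewrite in_itv /= => x0 /cell_trunc[/(lt_le_trans x0)]; rewrite ltxx.
- by move=> /cell_trunc[x0 _]; rewrite in_itv /= => /(le_lt_trans x0); rewrite ltxx.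
- by move=> /cell_trunc[_ ->] /cell_trunc[_ ->].
Qed.

Lemma integral_on_cell_bump k n : (k <= n)%N -> integral_on (cell k) (bump n) = 0.
Proof.
move=> kn; rewrite integral_on_bump; last exact: measurable_cell.
rewrite (_ : unit_itv n `&` cell k = set0) ?measure0 //.
apply/seteqP; split=> // x []; rewrite /unit_itv /cell /= !in_itv /= => /andP[nx _].
case: k kn => [|k] kn /=.
  by move=> x0; move: (le_lt_trans nx x0); rewrite ltNge ler0n.
move=> /andP[_ xk]; move: (le_lt_trans nx xk).
by rewrite natr1 ltr_nat ltnS leqNgt kn.
Qed.

Section bump_limit.
Context (G : set_system nat) {GU : UltraFilter G} (free_G : \oo `<=` G).

Definition bump_limit (Phi : (R -> R) -> R) : R := ulim G (fun n => Phi (bump n)).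

Let Xs := bounded_linear_functionals X N.

Lemma bump_limitD phi psi : Xs phi -> Xs psi ->
  bump_limit (phi \+ psi) = bump_limit phi + bump_limit psi.
Proof.
move=> /dual_bounded_on_bumps[B1 hB1] /dual_bounded_on_bumps[B2 hB2].
exact: ulimD hB1 hB2.
Qed.

Lemma bump_limitZ c phi : Xs phi -> bump_limit (c \*: phi) = c * bump_limit phi.
Proof. by move=> /dual_bounded_on_bumps[B hB]; exact: ulimZ hB. Qed.

Lemma bump_limit_bounded : exists C : R, forall phi M,
  Xs phi -> dual_bound X N phi M -> `|bump_limit phi| <= C * M.
Proof.
exists ggl_const => phi M _ [_ hM]; apply: ulim_norm_le => n.
by have := hM _ (bump_in_ggl n); rewrite ggl_norm_bump -EFinM lee_fin mulrC.
Qed.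

Lemma bump_limit_integral_on_cell k : bump_limit (integral_on (cell k)) = 0.
Proof.
apply: ulim_near_cst; apply: free_G.
by exists k => // n /= kn; exact: integral_on_cell_bump.
Qed.

Lemma bump_limit_integral : bump_limit (integral_on setT) = 1.
Proof.
apply: ulim_near_cst; apply: nearW => n.
by rewrite integral_on_bump // setIT lebesgue_measure_unit_itv.
Qed.

Lemma bump_limit_not_evaluation h : X h ->
  ~ (forall phi, Xs phi -> bump_limit phi = phi h).
Proof.
move=> Xh evh.
have ih := ggl_space_integrable Xh.
have cell0 k : (\int[mu]_(x in cell k) (h x)%:E = 0)%E.
  have /esym := evh _ (integral_on_dual (measurable_cell k)).
  rewrite bump_limit_integral_on_cell /integral_on => e.
  rewrite -[LHS]fineK ?e //; apply: (integrable_fin_num (measurable_cell k)).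
  exact: (integrableS measurableT (measurable_cell k) (fun _ _ => I) ih).
have : (\int[mu]_(x in \bigcup_k cell k) (h x)%:E = 0)%E.
  rewrite integral_bigcup //; first exact: eseries0.
  - exact: trivIset_cell.
  - exact: measurable_cell.
  - by rewrite bigcup_cell.
rewrite bigcup_cell => int0.
have := evh _ (integral_on_dual measurableT).
by rewrite bump_limit_integral /integral_on int0 => /eqP; rewrite oner_eq0.
Qed.

End bump_limit.
End unit_weight.

Theorem corollary2 (R : realType) (p theta : R) (hp : 1 < p) (htheta : 0 < theta) :
  exists a : R -> R, weight a /\
    ~ reflexive_space (ggl_space p theta a) (ggl_norm p theta a).
Proof.
exists (cst 1); split; first exact: weight_cst1.
move=> reflexive.
have [G [GU free_G]] := @ultraFilterLemma nat \oo _.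
have [||| h Xh evh] := reflexive (bump_limit G).
- exact: bump_limitD.
- exact: bump_limitZ.
- exact: bump_limit_bounded.
exact: (@bump_limit_not_evaluation _ _ _ hp G GU free_G h Xh evh).
Qed.
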